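(* Let $(G,\mathcal{B}_1,\mathcal{B}_2)$ be a Rota-Baxter system of groups, and set $G_1=\mathcal{B}_1(G)$, $G_2=\mathcal{B}_2(G)$, $H_1=\mathcal{B}_1(\operatorname{Ker}(\mathcal{B}_2))$, $H_2=\mathcal{B}_2(\operatorname{Ker}(\mathcal{B}_1))$, where $\operatorname{Ker}(\mathcal{B}_i)=\{a\in G\mid\mathcal{B}_i(a)=1_G\}$. Then $H_1$ is a normal subgroup of the group $G_1$, $H_2$ is a normal subgroup of the group $G_2$, and the map $\Theta:G_1/H_1\to G_2/H_2$, $\Theta(\mathcal{B}_1(a)H_1)=\mathcal{B}_2(a)H_2$ for $a\in G$, is well defined and is a group anti-isomorphism (a bijection with $\Theta(xy)=\Theta(y)\Theta(x)$).
   Context: A Rota-Baxter system of groups is a triple $(G,\mathcal{B}_1,\mathcal{B}_2)$ where $G$ is a group with identity $1_G$ and $\mathcal{B}_1,\mathcal{B}_2:G\to G$ are maps such that for all $a,b\in G$: $\mathcal{B}_1(a)\mathcal{B}_1(b)=\mathcal{B}_1(\mathcal{B}_1(a)b\mathcal{B}_2(a))$ and $\mathcal{B}_2(b)\mathcal{B}_2(a)=\mathcal{B}_2(\mathcal{B}_1(a)b\mathcal{B}_2(a))$. *)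

From HB Require Import structures.
From mathcomp Require Import all_boot.
Set Implicit Arguments. Unset Strict Implicit. Unset Printing Implicit Defensive.
Local Open Scope group_scope.

Section RBS.
Variable G : groupType.

Definition RB_system (B1 B2 : G -> G) : Prop :=
  forall a b : G,
    B1 a * B1 b = B1 (B1 a * b * B2 a) /\
    B2 b * B2 a = B2 (B1 a * b * B2 a).

Definition img (f : G -> G) (S : G -> Prop) : G -> Prop :=
  fun y => exists x, S x /\ f x = y.

Definition fullset : G -> Prop := fun _ => True.

Definition kerm (f : G -> G) : G -> Prop := fun a => f a = 1.

Definition is_subgroup (H K : G -> Prop) : Prop :=
  (forall x, H x -> K x) /\ H 1 /\
  (forall x y, H x -> H y -> H (x * y)) /\
  (forall x, H x -> H x^-1).

Definition is_normal_subgroup (H K : G -> Prop) : Prop :=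
  is_subgroup H K /\ forall x h, K x -> H h -> H (x^-1 * h * x).

Definition lcoset (x : G) (H : G -> Prop) : G -> Prop :=
  fun y => exists h, H h /\ y = x * h.

(* elementwise product of subsets (product in the quotient group) *)
Definition setmul (C D : G -> Prop) : G -> Prop :=
  fun y => exists c d, C c /\ D d /\ y = c * d.

Definition quot_elem (K H : G -> Prop) (C : G -> Prop) : Prop :=
  exists x, K x /\ C = lcoset x H.

End RBS.

From HB Require Import structures.
From mathcomp Require Import all_boot.
From Stdlib Require Import FunctionalExtensionality PropExtensionality.
Set Implicit Arguments.
Unset Strict Implicit.
Unset Printing Implicit Defensive.
Local Open Scope group_scope.

(* With the derived product a o b := B1 a * b * B2 a, the RB identities say that
   B1 turns o into the product of G and B2 into the opposite product; this gives
   the subgroups G1, G2 and the normality of H1, H2.  The heart of the matter is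
   that B1 w lies in H1 iff B2 w lies in H2: applied to w = a^-1 o a' (with a^-1
   the o-inverse), for which B1 w = (B1 a)^-1 B1 a' and B2 w = B2 a' (B2 a)^-1
   (a conjugate of (B2 a)^-1 B2 a' by an element of G2), it shows that
   B1 a H1 = B1 a' H1 iff B2 a H2 = B2 a' H2, i.e. Theta is well defined and
   injective. *)

Section Cosets.
Variable G : groupType.
Implicit Types (H K : G -> Prop) (x y : G).

Lemma lcoset_eq (H K : G -> Prop) {x y} : is_subgroup H K ->
  lcoset x H = lcoset y H <-> H (x^-1 * y).
Proof.
move=> [_ [H1 [HM HV]]]; split.
- move=> e; have : lcoset y H y by exists 1; rewrite mulg1.
  by rewrite -e => -[h [Hh ->]]; rewrite mulKg.
- move=> Hxy; apply: functional_extensionality => z.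
  apply: propositional_extensionality; split => -[h [Hh ->]].
  + exists ((x^-1 * y)^-1 * h); split; first by apply: HM => //; apply: HV.
    by rewrite invgM invgK !mulgA mulgV mul1g.
  + exists ((x^-1 * y) * h); split; first exact: HM.
    by rewrite !mulgA mulgV mul1g.
Qed.

Lemma setmul_lcoset (H K : G -> Prop) {x y} : is_normal_subgroup H K -> K y ->
  setmul (lcoset x H) (lcoset y H) = lcoset (x * y) H.
Proof.
move=> [[_ [H1 [HM _]]] HN] Ky.
apply: functional_extensionality => z; apply: propositional_extensionality.
split.
- move=> [c [d [[h [Hh ->]] [[h' [Hh' ->]] ->]]]].
  exists ((y^-1 * h * y) * h'); split; first by apply: HM => //; apply: HN.
  by rewrite !mulgA mulgK.
- move=> [h [Hh ->]]; exists x, (y * h); split; first by exists 1; rewrite mulg1.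
  by split; [exists h | rewrite mulgA].
Qed.

End Cosets.


Section RotaBaxterSystem.
Variables (G : groupType) (B1 B2 : G -> G).
Hypothesis rbs : RB_system B1 B2.

Let G1 := img B1 (@fullset G).
Let G2 := img B2 (@fullset G).
Let H1 := img B1 (kerm B2).
Let H2 := img B2 (kerm B1).

Definition rb_mul (a b : G) : G := B1 a * b * B2 a.

Lemma B1_mul a b : B1 a * B1 b = B1 (rb_mul a b).
Proof. exact: (rbs a b).1. Qed.

Lemma B2_mul a b : B2 b * B2 a = B2 (rb_mul a b).
Proof. exact: (rbs a b).2. Qed.

Definition rb_unit : G := (B1 1)^-1 * (B2 1)^-1.

Lemma B1_unit : B1 rb_unit = 1.
Proof.
apply: (mulgI (B1 1)); rewrite mulg1 B1_mul /rb_mul.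
by rewrite /rb_unit mulgA mulgV mul1g mulVg.
Qed.

Lemma B2_unit : B2 rb_unit = 1.
Proof.
apply: (mulIg (B2 1)); rewrite mul1g B2_mul /rb_mul.
by rewrite /rb_unit mulgA mulgV mul1g mulVg.
Qed.

Definition rb_inv (a : G) : G := (B1 a)^-1 * rb_unit * (B2 a)^-1.

Lemma rb_mul_inv a : rb_mul a (rb_inv a) = rb_unit.
Proof. by rewrite /rb_mul /rb_inv !mulgA mulgV mul1g mulgVK. Qed.

Lemma B1_inv a : B1 (rb_inv a) = (B1 a)^-1.
Proof.
by apply: (mulgI (B1 a)); rewrite B1_mul rb_mul_inv B1_unit mulgV.
Qed.

Lemma B2_inv a : B2 (rb_inv a) = (B2 a)^-1.
Proof.
by apply: (mulIg (B2 a)); rewrite B2_mul rb_mul_inv B2_unit mulVg.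
Qed.

Lemma img_full (f : G -> G) a : img f (@fullset G) (f a).
Proof. by exists a. Qed.

Lemma image_B1_subgroup : is_subgroup G1 (@fullset G).
Proof.
split=> //; split; first by exists rb_unit; rewrite B1_unit.
split.
- by move=> _ _ [a [_ <-]] [b [_ <-]]; rewrite B1_mul; apply: img_full.
- by move=> _ [a [_ <-]]; rewrite -B1_inv; apply: img_full.
Qed.

Lemma image_B2_subgroup : is_subgroup G2 (@fullset G).
Proof.
split=> //; split; first by exists rb_unit; rewrite B2_unit.
split.
- by move=> _ _ [a [_ <-]] [b [_ <-]]; rewrite B2_mul; apply: img_full.
- by move=> _ [a [_ <-]]; rewrite -B2_inv; apply: img_full.
Qed.

Lemma image_B1_kerB2_normal : is_normal_subgroup H1 G1.
Proof.
split; first split; first by move=> _ [a [_ <-]]; apply: img_full.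
- split; first by exists rb_unit; rewrite /kerm B2_unit B1_unit.
  split.
  + move=> _ _ [a [Ka <-]] [b [Kb <-]]; exists (rb_mul a b).
    by rewrite /kerm -B2_mul Ka Kb mulg1 B1_mul.
  + by move=> _ [a [Ka <-]]; exists (rb_inv a); rewrite /kerm B2_inv Ka invg1 B1_inv.
- move=> _ _ [c [_ <-]] [k [Kk <-]]; exists (rb_mul (rb_mul (rb_inv c) k) c).
  rewrite /kerm -!B2_mul -!B1_mul Kk B2_inv B1_inv.
  by rewrite mul1g mulgV.
Qed.

Lemma image_B2_kerB1_normal : is_normal_subgroup H2 G2.
Proof.
split; first split; first by move=> _ [a [_ <-]]; apply: img_full.
- split; first by exists rb_unit; rewrite /kerm B1_unit B2_unit.
  split.
  + move=> _ _ [a [Ka <-]] [b [Kb <-]]; exists (rb_mul b a).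
    by rewrite /kerm -B1_mul Ka Kb mulg1 B2_mul.
  + by move=> _ [a [Ka <-]]; exists (rb_inv a); rewrite /kerm B1_inv Ka invg1 B2_inv.
- move=> _ _ [c [_ <-]] [k [Kk <-]]; exists (rb_mul c (rb_mul k (rb_inv c))).
  rewrite /kerm -!B1_mul -!B2_mul Kk B1_inv B2_inv.
  by rewrite mul1g mulgV.
Qed.

Lemma image_B1_kerB2E w : H1 (B1 w) <-> H2 (B2 w).
Proof.
split.
- move=> [k [Kk ek]]; exists (rb_mul w (rb_inv k)).
  by rewrite /kerm -B1_mul B1_inv ek mulgV -B2_mul B2_inv Kk invg1 mul1g.
- move=> [k [Kk ek]]; exists (rb_mul (rb_inv k) w).
  by rewrite /kerm -B2_mul B2_inv ek mulgV -B1_mul B1_inv Kk invg1 mul1g.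
Qed.

Lemma lcoset_B1_eq a a' :
  lcoset (B1 a) H1 = lcoset (B1 a') H1 <-> lcoset (B2 a) H2 = lcoset (B2 a') H2.
Proof.
have [_ nH2] := image_B2_kerB1_normal.
rewrite (lcoset_eq image_B1_kerB2_normal.1).
rewrite (lcoset_eq image_B2_kerB1_normal.1).
rewrite -B1_inv B1_mul image_B1_kerB2E -B2_mul B2_inv.
split => H.
- by have := nH2 _ _ (img_full B2 a) H; rewrite mulgA mulgVK.
- have := nH2 _ _ (img_full B2 (rb_inv a)) H.
  by rewrite B2_inv invgK mulgA mulgV mul1g.
Qed.

(* Defined without choosing representatives; it is empty off G1/H1. *)
Definition rb_theta (C : G -> Prop) : G -> Prop :=
  fun z => exists a, C = lcoset (B1 a) H1 /\ lcoset (B2 a) H2 z.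

Lemma rb_theta_lcoset a : rb_theta (lcoset (B1 a) H1) = lcoset (B2 a) H2.
Proof.
apply: functional_extensionality => z; apply: propositional_extensionality.
split; last by exists a.
by move=> [a' [e Hz]]; rewrite ((lcoset_B1_eq a a').1 e).
Qed.

Lemma quot_elem_B1_coset C : quot_elem G1 H1 C -> exists a, C = lcoset (B1 a) H1.
Proof. by move=> [_ [[a [_ <-]] ->]]; exists a. Qed.

Lemma quot_elem_lcoset_B2 a : quot_elem G2 H2 (lcoset (B2 a) H2).
Proof. by exists (B2 a); split=> //; apply: img_full. Qed.

Lemma quot_elem_lcoset_B1 a : quot_elem G1 H1 (lcoset (B1 a) H1).
Proof. by exists (B1 a); split=> //; apply: img_full. Qed.

Lemma rb_theta_antimorph a b :
  rb_theta (setmul (lcoset (B1 a) H1) (lcoset (B1 b) H1)) =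
  setmul (rb_theta (lcoset (B1 b) H1)) (rb_theta (lcoset (B1 a) H1)).
Proof.
rewrite (setmul_lcoset image_B1_kerB2_normal (img_full B1 b)) B1_mul.
rewrite !rb_theta_lcoset (setmul_lcoset image_B2_kerB1_normal (img_full B2 a)).
by rewrite B2_mul.
Qed.

End RotaBaxterSystem.

Theorem proposition5p4 (G : groupType) (B1 B2 : G -> G) :
  RB_system B1 B2 ->
  let G1 := img B1 (@fullset G) in
  let G2 := img B2 (@fullset G) in
  let H1 := img B1 (kerm B2) in
  let H2 := img B2 (kerm B1) in
  is_subgroup G1 (@fullset G) /\ is_subgroup G2 (@fullset G) /\
  is_normal_subgroup H1 G1 /\ is_normal_subgroup H2 G2 /\
  exists Theta : (G -> Prop) -> (G -> Prop),
    (forall a : G, Theta (lcoset (B1 a) H1) = lcoset (B2 a) H2) /\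
    (forall C, quot_elem G1 H1 C -> quot_elem G2 H2 (Theta C)) /\
    (forall C D, quot_elem G1 H1 C -> quot_elem G1 H1 D ->
       Theta C = Theta D -> C = D) /\
    (forall E, quot_elem G2 H2 E -> exists C, quot_elem G1 H1 C /\ Theta C = E) /\
    (forall C D, quot_elem G1 H1 C -> quot_elem G1 H1 D ->
       Theta (setmul C D) = setmul (Theta D) (Theta C)).
Proof.
move=> rbs G1 G2 H1 H2.
split; first exact: image_B1_subgroup.
split; first exact: image_B2_subgroup.
split; first exact: image_B1_kerB2_normal.
split; first exact: image_B2_kerB1_normal.
have thetaE := rb_theta_lcoset rbs.
exists (rb_theta B1 B2); split; first exact: thetaE.
split.
  by move=> C /quot_elem_B1_coset [a ->]; rewrite thetaE; apply: quot_elem_lcoset_B2.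
split.
  move=> C D /quot_elem_B1_coset [a ->] /quot_elem_B1_coset [b ->]; rewrite !thetaE.
  exact: (lcoset_B1_eq rbs a b).2.
split.
  move=> E /quot_elem_B1_coset [a ->]; exists (lcoset (B1 a) H1).
  by split; [apply: quot_elem_lcoset_B1 | apply: thetaE].
move=> C D /quot_elem_B1_coset [a ->] /quot_elem_B1_coset [b ->].
exact: rb_theta_antimorph.
Qed.
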